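(* For every integer $r\ge 7$, ${\rm dim}_s(P_5\diamond P_r)={\rm dim}_s(P_5\diamond C_r)=3r-2$.
   Context: The modular product $G\diamond H$ has vertex set $V(G)\times V(H)$; distinct vertices $(g,h)$ and $(g',h')$ are adjacent iff ($g=g'$ and $hh'\in E(H)$), or ($gg'\in E(G)$ and $h=h'$), or ($gg'\in E(G)$ and $hh'\in E(H)$), or ($g\neq g'$, $h\neq h'$, $gg'\notin E(G)$ and $hh'\notin E(H)$). $P_n$ and $C_n$ are the path and cycle on $n$ vertices. ${\rm dim}_s(X)$ is the strong metric dimension: the minimum size of $S\subseteq V(X)$ such that for all distinct $x,y$ some $z\in S$ has $d_X(y,z)=d_X(y,x)+d_X(x,z)$ or $d_X(x,z)=d_X(x,y)+d_X(y,z)$. *)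

(* Simple graphs = relations on a finType (assumed symmetric, irreflexive). *)
From mathcomp Require Import all_boot.
Local Open Scope nat_scope.
Set Implicit Arguments. Unset Strict Implicit. Unset Printing Implicit Defensive.

Definition pathg (n : nat) : rel 'I_n := fun i j => (i.+1 == j :> nat) || (j.+1 == i :> nat).

Definition cycleg (n : nat) : rel 'I_n :=
  fun i j => (i != j) && (((i.+1 %% n) == j :> nat) || ((j.+1 %% n) == i :> nat)).

Definition modprod (T U : finType) (eG : rel T) (eH : rel U) : rel (T * U) :=
  fun x y =>
    let: (g, h) := x in let: (g', h') := y in
    (x != y) &&
    [|| (g == g') && eH h h',
        eG g g' && (h == h'),
        eG g g' && eH h h'
      | [&& g != g', h != h', ~~ eG g g' & ~~ eH h h']].

Definition reach (T : finType) (e : rel T) (k : nat) (x : T) : {set T} :=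
  iter k (fun A => A :|: [set y | [exists z in A, e z y]]) [set x].

(* graph distance: least k with y reachable within k steps
   (equals #|T| if y is unreachable from x; irrelevant for connected graphs) *)
Definition dist (T : finType) (e : rel T) (x y : T) : nat :=
  find (fun k => y \in reach e k x) (iota 0 #|T|).

Definition strong_resolving (T : finType) (e : rel T) (S : {set T}) : bool :=
  [forall x : T, forall y : T, (x != y) ==>
    [exists z in S,
      (dist e y z == dist e y x + dist e x z) || (dist e x z == dist e x y + dist e y z)]].

(* strong metric dimension: minimum size of a strong resolving set
   (setT is always strongly resolving, so the minimum is attained) *)
Definition sdim (T : finType) (e : rel T) : nat :=
  \big[minn/#|T|]_(S : {set T} | strong_resolving e S) #|S|.

Arguments pathg n : clear implicits.
Arguments cycleg n : clear implicits.

From mathcomp Require Import all_boot zify.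
Set Implicit Arguments. Unset Strict Implicit. Unset Printing Implicit Defensive.

(* In [P_5 ◇ H] the distance between [(g, h)] and [(g', h')] depends only on
   [g], [g'] and on whether [h] and [h'] are equal, adjacent or distinct and
   non-adjacent, as soon as every edge of [H] has a private neighbour and any
   two vertices of [H] have a common non-neighbour; paths and cycles on at
   least 7 vertices qualify.  The resulting 5 x 5 x 3 table shows that
   [(0, h), (3, h)], [(1, h), (4, h)] and, for non-adjacent [h != h'],
   [(2, h), (2, h')] are mutually maximally distant, so a strong resolving set
   meets each such pair: it has [|H|] vertices in rows 0 and 3, [|H|] in rows 1
   and 4, and misses only a clique of row 2, which has at most two vertices
   when [H] is triangle-free.  Conversely rows 0 and 1 together with row 2
   minus the ends of one edge strongly resolve [P_5 ◇ H]. *)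

Notation "[ 'all' x < n , P ]" := (all (fun x : nat => P) (iota 0 n))
  (at level 0, x name, format "[ 'all'  x  <  n ,  P ]").
Notation "[ 'has' x < n , P ]" := (has (fun x : nat => P) (iota 0 n))
  (at level 0, x name, format "[ 'has'  x  <  n ,  P ]").

Lemma all_iota_ltn n (P : pred nat) x : all P (iota 0 n) -> x < n -> P x.
Proof. by move=> /allP PP xn; apply: PP; rewrite mem_iota. Qed.

Lemma find_leq_iota a n m : a <= m < a + n -> find (leq m) (iota a n) = m - a.
Proof.
elim: n a => [|n IH] a /andP [am mn] /=; first lia.
by case: leqP => [|lt_am]; [lia | rewrite IH; lia].
Qed.

Lemma bigmin_leq (I : eqType) (s : seq I) (P : pred I) (F : I -> nat) d j :
  j \in s -> P j -> \big[minn/d]_(i <- s | P i) F i <= F j.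
Proof.
elim: s => // a s IH; rewrite inE big_cons => /orP [/eqP <- -> | js Pj].
  exact: geq_minl.
by case: (P a); [apply: leq_trans (geq_minr _ _) _|]; apply: IH.
Qed.

Lemma card_ord_vals r (A : {set 'I_r}) (s : seq nat) :
  (forall i, i \in A -> nat_of_ord i \in s) -> #|A| <= size s.
Proof.
move=> As; rewrite cardE -(size_map val); apply: uniq_leq_size.
  by rewrite map_inj_uniq ?enum_uniq //; exact: val_inj.
by move=> n /mapP [i]; rewrite mem_enum => /As iS ->.
Qed.

(** * Distances from a potential *)

Section Potential.
Variables (T : finType) (e : rel T) (x : T) (f : T -> nat).
Hypotheses (f_eq0 : forall y, (f y == 0) = (y == x))
  (f_lipschitz : forall z y, e z y -> f y <= (f z).+1)
  (f_descent : forall y, y != x -> exists2 z, e z y & (f z).+1 = f y).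

Lemma mem_reach k y : (y \in reach e k x) = (f y <= k).
Proof.
elim: k y => [|k IH] y; first by rewrite in_set1 leqn0 f_eq0.
rewrite /reach iterS -/(reach e k x) in_setU IH [y \in [set _ | _]]in_set.
apply/idP/idP => [/orP [/leqW //|] | le_y].
  by case/exists_inP => z; rewrite IH => le_z /f_lipschitz/leq_trans->.
have [//|gt_y] := leqP (f y) k; have fy : f y = k.+1 by lia.
have [|z ezy fz] := f_descent (y := y); first by rewrite -f_eq0 fy.
by apply/orP; right; apply/exists_inP; exists z; rewrite // IH -ltnS fz fy.
Qed.

Lemma dist_potential y : f y < #|T| -> dist e x y = f y.
Proof.
move=> fyT; rewrite /dist (eq_find (a2 := leq (f y))) => [|k]; last exact: mem_reach.
by rewrite find_leq_iota ?subn0.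
Qed.

End Potential.

(** * Strong resolving sets *)

Section StrongResolving.
Variables (T : finType) (e : rel T).

Definition strongly_resolves (x y z : T) : bool :=
  (dist e y z == dist e y x + dist e x z) || (dist e x z == dist e x y + dist e y z).

Lemma strong_resolvingP (S : {set T}) :
  reflect (forall x y, x != y -> exists2 z, z \in S & strongly_resolves x y z)
          (strong_resolving e S).
Proof.
apply: (iffP forallP) => [srS x y nxy | srS x].
  by move/forallP/(_ y)/implyP/(_ nxy)/exists_inP: (srS x).
by apply/forallP => y; apply/implyP => /srS /exists_inP.
Qed.

Lemma dist_refl x : dist e x x = 0.
Proof.
have : 0 < #|T| by apply/card_gt0P; exists x.
by rewrite /dist; case: #|T| => //= n _; rewrite set11.
Qed.

Lemma strong_resolving_outside (S : {set T}) :
  (forall x y, x != y -> x \notin S -> y \notin S ->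
     exists2 z, z \in S & strongly_resolves x y z) ->
  strong_resolving e S.
Proof.
move=> srS; apply/strong_resolvingP => x y nxy.
have [xS|xS] := boolP (x \in S).
  by exists x; rewrite // /strongly_resolves dist_refl addn0 eqxx.
have [yS|yS] := boolP (y \in S); last exact: srS.
by exists y; rewrite // /strongly_resolves dist_refl addn0 eqxx orbT.
Qed.

Lemma strong_resolving_pair_mem (S : {set T}) x y : strong_resolving e S -> x != y ->
  (forall z, strongly_resolves x y z -> (z == x) || (z == y)) ->
  (x \in S) || (y \in S).
Proof.
move=> /strong_resolvingP srS nxy only_xy.
by have [z zS /only_xy /orP [] /eqP <-] := srS x y nxy; rewrite zS ?orbT.
Qed.

Lemma sdim_leq (S : {set T}) : strong_resolving e S -> sdim e <= #|S|.
Proof. by move=> srS; apply: bigmin_leq; rewrite ?mem_index_enum. Qed.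

Lemma leq_sdim n : n <= #|T| -> (forall S, strong_resolving e S -> n <= #|S|) ->
  n <= sdim e.
Proof.
move=> nT nS; apply: (big_ind (leq n)) => // a b na nb.
by rewrite leq_min na nb.
Qed.

End StrongResolving.

(** * Conditions on the second factor *)

Definition triangle_free (U : finType) (e : rel U) :=
  forall a b c, e a b -> e b c -> e a c -> False.

Lemma triangle_free_clique_card (U : finType) (e : rel U) (A : {set U}) :
  triangle_free e -> {in A &, forall a b, a != b -> e a b} -> #|A| <= 2.
Proof.
move=> trifree clique; rewrite leqNgt; apply/negP.
case/card_gt2P => [a [b [c [[aA bA cA] [nab nbc nca]]]]].
by apply: (trifree a b c); apply: clique; rewrite // eq_sym.
Qed.

Definition common_non_neighbour (U : finType) (e : rel U) :=
  forall h h', exists h'', [&& h'' != h, h'' != h', ~~ e h h'' & ~~ e h'' h'].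

Definition edge_private_neighbour (U : finType) (e : rel U) :=
  forall h h', e h h' -> exists h'',
    [&& e h h'', h'' != h' & ~~ e h'' h'] || [&& e h'' h', h'' != h & ~~ e h h''].

Lemma common_non_neighbour_deg2 (U : finType) (e : rel U) : symmetric e ->
  (forall h, #|[set h' | e h h']| <= 2) -> 6 < #|U| -> common_non_neighbour e.
Proof.
move=> sym deg2 U7 h h'.
have closed_nbhd h0 : #|h0 |: [set h'' | e h0 h'']| <= 3.
  by rewrite cardsU1 -addn1 addnC leq_add ?leq_b1.
pose N := h |: [set h'' | e h h''] :|: (h' |: [set h'' | e h' h'']).
have /card_gt0P [h'' ] : 0 < #|~: N|.
  have N6 : #|N| <= 6 :=
    leq_trans (leq_card_setU _ _) (leq_add (closed_nbhd h) (closed_nbhd h')).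
  by have := cardsC N; lia.
rewrite !inE !negb_or => /andP [/andP [nh nhh] /andP [nh' nh'h]].
by exists h''; rewrite nh nhh nh' sym nh'h.
Qed.

(** * The distance table of [P_5 ◇ H] *)

Definition consecutive (g g' : nat) : bool := (g.+1 == g') || (g'.+1 == g).

Definition htype (U : finType) (e : rel U) (h h' : U) : nat :=
  if h == h' then 0 else if e h h' then 1 else 2.

(* Below, [t1], [t2], [t3] stand for [htype e hx hy], [htype e hx hz] and
   [htype e hz hy] for vertices [(gx, hx)], [(gy, hy)], [(gz, hz)]. *)
Definition consistent (t1 t2 t3 : nat) : bool :=
  [&& (t2 == 0) ==> (t1 == t3), (t3 == 0) ==> (t1 == t2) & (t1 == 0) ==> (t2 == t3)].

Section HType.
Variables (U : finType) (e : rel U).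

Lemma htype_lt3 h h' : htype e h h' < 3.
Proof. by rewrite /htype; case: ifP => //; case: ifP. Qed.

Lemma htype_refl h : htype e h h = 0.
Proof. by rewrite /htype eqxx. Qed.

Lemma htype_eq0 h h' : (htype e h h' == 0) = (h == h').
Proof. by rewrite /htype; case: ifP => //; case: ifP. Qed.

Lemma htype_nonadj h h' : h != h' -> ~~ e h h' -> htype e h h' = 2.
Proof. by rewrite /htype => /negbTE -> /negbTE ->. Qed.

Hypothesis e_irr : irreflexive e.

Lemma htype_eq1 h h' : (htype e h h' == 1) = e h h'.
Proof. by rewrite /htype; case: (h =P h') => [<-|_]; [rewrite e_irr | case: ifP]. Qed.

Lemma htype_adj h h' : e h h' -> htype e h h' = 1.
Proof. by rewrite -htype_eq1 => /eqP. Qed.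

Hypothesis e_sym : symmetric e.

Lemma htype_sym h h' : htype e h h' = htype e h' h.
Proof. by rewrite /htype eq_sym e_sym. Qed.

Lemma htype_consistent h1 h2 h3 :
  consistent (htype e h1 h2) (htype e h1 h3) (htype e h3 h2).
Proof.
rewrite /consistent !htype_eq0.
by apply/and3P; split; apply/implyP => /eqP eq_h; rewrite eq_h // htype_sym.
Qed.

End HType.

(* With [t = htype e h h'], [mp5_adj g g' t] and [mp5_dist g g' t] are the
   adjacency and (by [dist_mp5]) the distance of [(g, h)] and [(g', h')]. *)
Definition mp5_adj (g g' t : nat) : bool :=
  [|| (g == g') && (t == 1), consecutive g g' && (t != 2)
    | [&& g != g', ~~ consecutive g g' & t == 2]].

Definition mp5_dist (g g' t : nat) : nat :=
  if g == g' then t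
  else if consecutive g g' then (if t == 2 then 2 else 1)
  else if t == 2 then 1 else if t == 1 then 2
  else if (g + 3 == g') || (g' + 3 == g) then 3 else 2.

Definition mp5_resolves (gx gy gz t1 t2 t3 : nat) : bool :=
  (mp5_dist gy gz t3 == mp5_dist gy gx t1 + mp5_dist gx gz t2)
  || (mp5_dist gx gz t2 == mp5_dist gx gy t1 + mp5_dist gy gz t3).

Definition mp5_predecessor (gx gy t t2 t3 : nat) : bool :=
  [has gz < 5, mp5_adj gz gy t3 && ((mp5_dist gx gz t2).+1 == mp5_dist gx gy t)].

Definition mp5_mutually_maximal (gx gy t : nat) : bool :=
  [all gz < 5, [all t2 < 3, [all t3 < 3,
    consistent t t2 t3 ==> mp5_resolves gx gy gz t t2 t3 ==>
    ((gz == gx) && (t2 == 0)) || ((gz == gy) && (t3 == 0))]]].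

Lemma mp5_dist_eq0 g g' t : (mp5_dist g g' t == 0) = (g == g') && (t == 0).
Proof. by rewrite /mp5_dist; case: (g =P g') => //= _; repeat case: ifP. Qed.

Lemma mp5_dist_le3 g g' t : t < 3 -> mp5_dist g g' t <= 3.
Proof. by move=> /ltnW t3; rewrite /mp5_dist; repeat case: ifP. Qed.

Lemma mp5_dist_lipschitz_table :
  [all gx < 5, [all gy < 5, [all gz < 5, [all t1 < 3, [all t2 < 3, [all t3 < 3,
    consistent t1 t2 t3 ==> mp5_adj gz gy t3 ==>
    (mp5_dist gx gy t1 <= (mp5_dist gx gz t2).+1)]]]]]].
Proof. by vm_compute. Qed.

(* A predecessor [(gz, hz)] of [(gy, hy)] on a geodesic from [(gx, hx)] can be
   found with [hz] equal to [hx] or [hy], a common non-neighbour of both, or,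
   if [hx hy] is an edge, a private neighbour of one of its ends. *)
Lemma mp5_dist_descent_table : [all gx < 5, [all gy < 5, [all t < 3,
  ~~ ((gx == gy) && (t == 0)) ==>
  [|| mp5_predecessor gx gy t 0 t, mp5_predecessor gx gy t t 0, mp5_predecessor gx gy t 2 2
    | [&& t == 1, mp5_predecessor gx gy t 1 2 & mp5_predecessor gx gy t 2 1]]]]].
Proof. by vm_compute. Qed.

Definition mp5_low_resolver (gx gy t : nat) : bool :=
  [has g < 2, mp5_resolves gx gy g t 0 t || mp5_resolves gx gy g t t 0].

Lemma mp5_low_resolver_table : [all gx < 5, [all gy < 5, [all t < 3,
  [&& 2 <= gx, 2 <= gy, ~~ ((gx == gy) && (t == 0)) & ~~ ((gx == 2) && (gy == 2))] ==>
  mp5_low_resolver gx gy t]]].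
Proof. by vm_compute. Qed.

Lemma mp5_mutually_maximal_rows : [&& mp5_mutually_maximal 0 3 0,
  mp5_mutually_maximal 1 4 0 & mp5_mutually_maximal 2 2 2].
Proof. by vm_compute. Qed.

Definition row (U : finType) (S : {set 'I_5 * U}) (k : nat) : {set U} :=
  [set h | (inord k, h) \in S].

Lemma card_rows (U : finType) (S : {set 'I_5 * U}) :
  #|S| = #|row S 0| + #|row S 1| + #|row S 2| + #|row S 3| + #|row S 4|.
Proof.
rewrite -sum1_card big_mkcond /=.
rewrite (eq_bigr (fun p => (fun g h => ((g, h) \in S) : nat) p.1 p.2)); last first.
  by move=> [g h] _; case: ifP.
rewrite -(pair_bigA _ (fun g h => ((g, h) \in S) : nat)) /=.
rewrite (eq_bigr (fun g : 'I_5 => #|row S g|)); last first.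
  move=> g _; rewrite -sum1_card [RHS]big_mkcond /=; apply: eq_bigr => h _.
  by rewrite inE inord_val; case: ifP.
rewrite -(big_mkord xpredT (fun k => #|row S k|)) /index_iota /=.
by rewrite !big_cons big_nil addn0 !addnA.
Qed.

Section ModularProductP5.
Variables (U : finType) (e : rel U).
Hypotheses (e_irr : irreflexive e) (e_sym : symmetric e).
Local Notation G := (modprod (pathg 5) e).

Lemma modprod_P5E (x y : 'I_5 * U) : G x y = mp5_adj x.1 y.1 (htype e x.2 y.2).
Proof.
case: x y => [g h] [g' h']; rewrite /modprod /mp5_adj /htype /= xpair_eqE.
rewrite -[g == g']/(nat_of_ord g == nat_of_ord g') /consecutive /pathg.
case: (h =P h') => [<-|_]; first rewrite e_irr.
  by rewrite !andbT !andbF /=; apply/idP/idP; lia.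
by case: (e h h'); case: (nat_of_ord g == g'); case: (g.+1 == g'); case: (g'.+1 == g).
Qed.

Lemma mp5_dist_lipschitz (x z y : 'I_5 * U) : G z y ->
  mp5_dist x.1 y.1 (htype e x.2 y.2) <= (mp5_dist x.1 z.1 (htype e x.2 z.2)).+1.
Proof.
case: x z y => [gx hx] [gz hz] [gy hy]; rewrite modprod_P5E /= => adj_zy.
have := all_iota_ltn (all_iota_ltn (all_iota_ltn (all_iota_ltn (all_iota_ltn (all_iota_ltn
  mp5_dist_lipschitz_table (ltn_ord gx)) (ltn_ord gy)) (ltn_ord gz))
  (htype_lt3 e hx hy)) (htype_lt3 e hx hz)) (htype_lt3 e hz hy).
by rewrite (htype_consistent e_sym) adj_zy.
Qed.

Lemma mp5_predecessor_witness (gx gy : 'I_5) hx hy hz t2 t3 :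
  mp5_predecessor gx gy (htype e hx hy) t2 t3 -> htype e hx hz = t2 -> htype e hz hy = t3 ->
  exists2 z, G z (gy, hy) &
    (mp5_dist gx z.1 (htype e hx z.2)).+1 = mp5_dist gx gy (htype e hx hy).
Proof.
move=> /hasP [gz]; rewrite mem_iota => /= lt_gz5 /andP [adj_zy /eqP dist_z] t2E t3E.
by exists (Ordinal lt_gz5, hz); rewrite ?modprod_P5E /= ?t2E ?t3E.
Qed.

Hypotheses (e_private : edge_private_neighbour e) (e_common : common_non_neighbour e).

Lemma mp5_dist_descent (x y : 'I_5 * U) : y != x -> exists2 z, G z y &
  (mp5_dist x.1 z.1 (htype e x.2 z.2)).+1 = mp5_dist x.1 y.1 (htype e x.2 y.2).
Proof.
case: x y => [gx hx] [gy hy] nyx.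
have := all_iota_ltn (all_iota_ltn (all_iota_ltn mp5_dist_descent_table (ltn_ord gx))
  (ltn_ord gy)) (htype_lt3 e hx hy).
have -> /= : ~~ ((nat_of_ord gx == gy) && (htype e hx hy == 0)).
  by apply: contra nyx; rewrite htype_eq0 => /andP [/eqP/val_inj -> /eqP ->].
case/or4P => [P | P | P | /and3P [t1 P12 P21]].
- by apply: (mp5_predecessor_witness (hz := hx) P); rewrite ?htype_refl.
- by apply: (mp5_predecessor_witness (hz := hy) P); rewrite ?htype_refl.
- have [h'' /and4P [nhx nhy nex ney]] := e_common hx hy.
  apply: (mp5_predecessor_witness (hz := h'') P);
    by apply: htype_nonadj; rewrite // eq_sym.
- move: t1; rewrite htype_eq1 // => /e_private [h'' /orP [] /and3P [eh nh neh]].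
    apply: (mp5_predecessor_witness (hz := h'') P12).
      exact: htype_adj.
    exact: htype_nonadj.
  apply: (mp5_predecessor_witness (hz := h'') P21).
    by apply: htype_nonadj; rewrite // eq_sym.
  exact: htype_adj.
Qed.

Lemma dist_mp5 (x y : 'I_5 * U) : dist G x y = mp5_dist x.1 y.1 (htype e x.2 y.2).
Proof.
case: x => gx hx /=.
apply: (dist_potential (f := fun y : 'I_5 * U => mp5_dist gx y.1 (htype e hx y.2))).
- move=> [gy hy]; rewrite mp5_dist_eq0 htype_eq0 xpair_eqE.
  by rewrite -(inj_eq val_inj) eq_sym [hy == _]eq_sym.
- exact: (mp5_dist_lipschitz (gx, hx)).
- by move=> w /mp5_dist_descent [z]; exists z.
- rewrite card_prod card_ord.
  have := mp5_dist_le3 gx y.1 (htype_lt3 e hx y.2).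
  have : 0 < #|U| by apply/card_gt0P; exists y.2.
  lia.
Qed.

Lemma strongly_resolves_mp5 (x y z : 'I_5 * U) : strongly_resolves G x y z =
  mp5_resolves x.1 y.1 z.1 (htype e x.2 y.2) (htype e x.2 z.2) (htype e z.2 y.2).
Proof.
by rewrite /strongly_resolves !dist_mp5 (htype_sym e_sym y.2 z.2) (htype_sym e_sym y.2 x.2).
Qed.

Lemma mp5_mutually_maximal_mem (S : {set 'I_5 * U}) (gx gy : 'I_5) hx hy :
  strong_resolving G S -> (gx, hx) != (gy, hy) ->
  mp5_mutually_maximal gx gy (htype e hx hy) -> ((gx, hx) \in S) || ((gy, hy) \in S).
Proof.
move=> srS nxy mm; apply: (strong_resolving_pair_mem srS nxy) => -[gz hz].
rewrite strongly_resolves_mp5 /= => res.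
have := all_iota_ltn (all_iota_ltn (all_iota_ltn mm (ltn_ord gz)) (htype_lt3 e hx hz))
  (htype_lt3 e hz hy).
rewrite htype_consistent // res /= !htype_eq0 !xpair_eqE (eq_sym hx).
by rewrite -!(inj_eq val_inj).
Qed.

Lemma rows_cover (S : {set 'I_5 * U}) a b : strong_resolving G S ->
  a < 5 -> b < 5 -> a != b -> mp5_mutually_maximal a b 0 ->
  #|U| <= #|row S a| + #|row S b|.
Proof.
move=> srS a5 b5 nab mm; rewrite -cardsT.
apply: leq_trans (leq_card_setU _ _); apply: subset_leq_card.
apply/subsetP => h _; rewrite !inE; apply: mp5_mutually_maximal_mem => //.
  by rewrite xpair_eqE eqxx andbT -(inj_eq val_inj) /= !inordK.
by rewrite htype_refl !inordK.
Qed.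

Lemma row2_compl_clique (S : {set 'I_5 * U}) : strong_resolving G S ->
  {in ~: row S 2 &, forall h h', h != h' -> e h h'}.
Proof.
move=> srS h h'; rewrite !inE => hS h'S nhh'; apply/negPn/negP => ne.
have /and3P [_ _ mm22] := mp5_mutually_maximal_rows.
have := mp5_mutually_maximal_mem (gx := inord 2) (gy := inord 2) (hx := h) (hy := h') srS.
rewrite (negbTE hS) (negbTE h'S) xpair_eqE eqxx (negbTE nhh') htype_nonadj // inordK //.
by move/(_ isT mm22).
Qed.

Hypothesis e_trifree : triangle_free e.

Lemma strong_resolving_mp5_card (S : {set 'I_5 * U}) :
  strong_resolving G S -> 3 * #|U| - 2 <= #|S|.
Proof.
move=> srS; have /and3P [mm03 mm14 _] := mp5_mutually_maximal_rows.
have c03 := rows_cover (a := 0) (b := 3) srS isT isT isT mm03.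
have c14 := rows_cover (a := 1) (b := 4) srS isT isT isT mm14.
have c2 := triangle_free_clique_card e_trifree (row2_compl_clique srS).
by have := cardsC (row S 2); rewrite card_rows; lia.
Qed.

Definition mp5_resolving_set (c0 c1 : U) : {set 'I_5 * U} :=
  [set x : 'I_5 * U | (x.1 <= 1) || [&& x.1 == 2 :> nat, x.2 != c0 & x.2 != c1]].

Lemma card_mp5_resolving_set c0 c1 : c0 != c1 ->
  #|mp5_resolving_set c0 c1| = 3 * #|U| - 2.
Proof.
move=> nc; rewrite card_rows.
have full k : k <= 1 -> #|row (mp5_resolving_set c0 c1) k| = #|U|.
  by move=> k1; rewrite -cardsT; apply: eq_card => h; rewrite !inE inordK //; lia.
have empty k : 3 <= k < 5 -> #|row (mp5_resolving_set c0 c1) k| = 0.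
  by move=> k35; apply: eq_card0 => h; rewrite !inE inordK; lia.
have r2 : #|row (mp5_resolving_set c0 c1) 2| + 2 = #|U|.
  rewrite -(cardsC [set c0; c1]) cards2 nc addnC; congr (_ + _).
  by apply: eq_card => h; rewrite !inE inordK // negb_or.
by rewrite (full 0) // (full 1) // (empty 3) // (empty 4) //; lia.
Qed.

Lemma strongly_resolves_row2_edge (x y : 'I_5 * U) : x.1 = 2 :> nat -> y.1 = 2 :> nat ->
  e x.2 y.2 -> exists h, strongly_resolves G x y (inord 0, h).
Proof.
case: x y => [gx hx] [gy hy] /= gx2 gy2 exy.
have [h /orP [] /and3P [eh nh neh]] := e_private exy.
all: exists h; rewrite strongly_resolves_mp5 /= gx2 gy2 inordK // (htype_adj e_irr exy).
  by rewrite (htype_adj e_irr eh) (htype_nonadj nh neh).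
by rewrite (htype_adj e_irr eh) (htype_nonadj _ neh) // eq_sym.
Qed.

Lemma strongly_resolves_low_rows (x y : 'I_5 * U) : x != y -> 2 <= x.1 -> 2 <= y.1 ->
  ~~ ((x.1 == 2 :> nat) && (y.1 == 2 :> nat)) ->
  exists2 z : 'I_5 * U, z.1 <= 1 & strongly_resolves G x y z.
Proof.
case: x y => [gx hx] [gy hy] /= nxy gx2 gy2 n22.
have := all_iota_ltn (all_iota_ltn (all_iota_ltn mp5_low_resolver_table (ltn_ord gx))
  (ltn_ord gy)) (htype_lt3 e hx hy).
have -> /= : ~~ ((nat_of_ord gx == gy) && (htype e hx hy == 0)).
  by apply: contra nxy; rewrite htype_eq0 => /andP [/eqP/val_inj -> /eqP ->].
rewrite gx2 gy2 n22 implyTb; case/hasP => g; rewrite mem_iota => g2.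
have g5 : g < 5 by lia.
by case/orP => res; [exists (inord g, hx) | exists (inord g, hy)];
  rewrite /= ?strongly_resolves_mp5 /= inordK ?htype_refl //; lia.
Qed.

Lemma mp5_resolving_set_resolving c0 c1 : e c0 c1 ->
  strong_resolving G (mp5_resolving_set c0 c1).
Proof.
move=> ec; apply: strong_resolving_outside => -[gx hx] [gy hy] nxy.
rewrite !inE /= !negb_or -!ltnNge => /andP [gx2 hxS] /andP [gy2 hyS].
have [/andP [/eqP gx_2 /eqP gy_2] | n22] :=
  boolP ((nat_of_ord gx == 2) && (nat_of_ord gy == 2)); last first.
  have [z z01 res] := strongly_resolves_low_rows nxy gx2 gy2 n22.
  by exists z; rewrite // inE z01.
have exy : e hx hy.
  have nh : hx != hy.
    apply: contra nxy => /eqP ->; rewrite xpair_eqE eqxx andbT.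
    by rewrite -(inj_eq val_inj) /= gx_2 gy_2.
  move: hxS hyS nh; rewrite gx_2 gy_2 /= !negb_and !negbK.
  by case/orP => /eqP -> /orP [] /eqP ->; rewrite ?eqxx // e_sym.
have [h res] := strongly_resolves_row2_edge (x := (gx, hx)) (y := (gy, hy)) gx_2 gy_2 exy.
by exists (inord 0, h); rewrite // inE /= inordK.
Qed.

Theorem sdim_modprod_P5 c0 c1 : e c0 c1 -> sdim G = 3 * #|U| - 2.
Proof.
move=> ec; have nc : c0 != c1 by apply: contraTneq ec => ->; rewrite e_irr.
apply/eqP; rewrite eqn_leq -{1}(card_mp5_resolving_set nc).
rewrite sdim_leq ?mp5_resolving_set_resolving //=.
apply: leq_sdim => [|S]; last exact: strong_resolving_mp5_card.
by rewrite card_prod card_ord (leq_trans (leq_subr _ _)) // leq_mul2r orbT.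
Qed.

End ModularProductP5.

(** * Paths and cycles *)

Lemma pathg_irr r : irreflexive (pathg r).
Proof. by move=> i; rewrite /pathg; apply/negbTE; lia. Qed.

Lemma pathg_sym r : symmetric (pathg r).
Proof. by move=> i j; rewrite /pathg orbC. Qed.

Lemma pathg_triangle_free r : triangle_free (pathg r).
Proof. by rewrite /pathg => a b c; lia. Qed.

Lemma pathg_deg2 r (i : 'I_r) : #|[set j | pathg r i j]| <= 2.
Proof. by apply: (card_ord_vals (s := [:: i.-1; i.+1])) => j; rewrite !inE /pathg; lia. Qed.

Lemma pathg_private r : 3 <= r -> edge_private_neighbour (pathg r).
Proof.
move=> r3 h h'; have := ltn_ord h; have := ltn_ord h'; rewrite /pathg => lt_h' lt_h ehh'.
have [lt_max|] := ltnP (maxn h h').+1 r.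
  by exists (Ordinal lt_max); rewrite -!(inj_eq val_inj) /=; lia.
have lt_min : (minn h h').-1 < r by lia.
by exists (Ordinal lt_min); rewrite -!(inj_eq val_inj) /=; lia.
Qed.

Lemma succ_modE (r a b : nat) : a < r -> b < r ->
  (a.+1 %% r == b) = (a.+1 == b) || ((a.+1 == r) && (b == 0)).
Proof.
move=> ar br; case: (ltngtP a.+1 r) => [lt_ar|gt_ar|->]; last by rewrite modnn; lia.
  by rewrite modn_small //; lia.
lia.
Qed.

Lemma cyclegE (r : nat) (i j : 'I_r) : cycleg r i j =
  (nat_of_ord i != j) && [|| i.+1 == j, (i.+1 == r) && (j == 0 :> nat),
                            j.+1 == i | (j.+1 == r) && (i == 0 :> nat)].
Proof. by rewrite /cycleg !succ_modE ?ltn_ord // !orbA. Qed.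

Lemma cycleg_irr r : irreflexive (cycleg r).
Proof. by move=> i; rewrite /cycleg eqxx. Qed.

Lemma cycleg_sym r : symmetric (cycleg r).
Proof. by move=> i j; rewrite /cycleg eq_sym orbC. Qed.

Lemma cycleg_triangle_free r : 4 <= r -> triangle_free (cycleg r).
Proof.
move=> r4 a b c; have := ltn_ord a; have := ltn_ord b; have := ltn_ord c.
rewrite !cyclegE; lia.
Qed.

Lemma cycleg_deg2 r (i : 'I_r) : #|[set j | cycleg r i j]| <= 2.
Proof.
apply: (card_ord_vals (s := [:: if i.+1 == r then 0 else i.+1;
                                if i == 0 :> nat then r.-1 else i.-1])) => j.
have := ltn_ord i; have := ltn_ord j; rewrite !inE cyclegE.
by case: ifP; case: ifP; lia.
Qed.

Lemma cycleg_private r : 4 <= r -> edge_private_neighbour (cycleg r).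
Proof.
move=> r4 h h'; have := ltn_ord h; have := ltn_ord h'; rewrite cyclegE => lt_h' lt_h ehh'.
have lt_succ k : k < r -> (if k.+1 == r then 0 else k.+1) < r by case: ifP; lia.
have [succ_h|] := boolP ((h.+1 == h' :> nat) || ((h.+1 == r) && (h' == 0 :> nat))).
  exists (Ordinal (lt_succ _ lt_h')); rewrite -!(inj_eq val_inj) !cyclegE /=.
  by case: ifP; lia.
exists (Ordinal (lt_succ _ lt_h)); rewrite -!(inj_eq val_inj) !cyclegE /=.
by case: ifP; lia.
Qed.

Theorem mainTheorem16 (r : nat) : 7 <= r ->
  sdim (modprod (pathg 5) (pathg r)) = 3 * r - 2 /\
  sdim (modprod (pathg 5) (cycleg r)) = 3 * r - 2.
Proof.
move=> r7; have r0 : 0 < r by lia.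
have r1 : 1 < r by lia.
have r4 : 4 <= r by lia.
have r6 : 6 < #|'I_r| by rewrite card_ord.
have p01 : pathg r (Ordinal r0) (Ordinal r1) by [].
have c01 : cycleg r (Ordinal r0) (Ordinal r1) by rewrite cyclegE /=; lia.
split.
  by rewrite (sdim_modprod_P5 (@pathg_irr r) (@pathg_sym r) (pathg_private (ltnW r4))
    (common_non_neighbour_deg2 (@pathg_sym r) (@pathg_deg2 r) r6)
    (@pathg_triangle_free r) p01) card_ord.
by rewrite (sdim_modprod_P5 (@cycleg_irr r) (@cycleg_sym r) (cycleg_private r4)
  (common_non_neighbour_deg2 (@cycleg_sym r) (@cycleg_deg2 r) r6)
  (cycleg_triangle_free r4) c01) card_ord.
Qed.
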